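(* Assume (A1), (A2), (A3). There are explicit constants $\mathcal C_1,\mathcal C_2,\mathcal C_r,\mathcal C_z>0$ such that for all $x,x',v,v'\in\mathbb R^d$, \[|x-x'|+|v-v'|\le\mathcal C_1\rho((x,v),(x',v')),\qquad |x-x'|^2+|v-v'|^2\le\mathcal C_2\rho((x,v),(x',v')),\] \[r(x,x',v,v')\le\mathcal C_r\rho((x,v),(x',v')),\qquad |x-x'|\le\mathcal C_zf(r(x,x',v,v'))\big(1+\epsilon\sqrt{H(x,v)}+\epsilon\sqrt{H(x',v')}\big).\]
   Context: $U,W\in\mathcal C^1(\mathbb R^d)$. (A1): $U\ge0$ and there exist $\lambda>0$, $A\ge0$ with $\tfrac12\nabla U(x)\cdot x\ge\lambda(U(x)+|x|^2/4)-A$ for all $x$. (A2): $\nabla U$ is $L_U$-Lipschitz, $L_U>0$. (A3): $W$ even, $\nabla W$ is $L_W$-Lipschitz, $L_W<\lambda/8$. Fix $\tilde A\ge0$ with $U(x)\ge\frac\lambda6|x|^2-\tilde A$ for all $x$. Set $\gamma=\frac{\lambda}{2(\lambda+1)}$, $B=24(A+(\lambda-\gamma)\tilde A+d)$, $H(x,v)=24U(x)+(6(1-\gamma)+\lambda)|x|^2+12x\cdot v+12|v|^2$, $\alpha=L_U+\frac\lambda4$, $R_1=\sqrt{\frac{24((1+\alpha)^2+\alpha^2)}{5\gamma\min(3,\lambda/3)}B}$, $r(x,\tilde x,v,\tilde v)=\alpha|x-\tilde x|+|x-\tilde x+v-\tilde v|$, $\kappa_0=\frac{L_U+L_W}\alpha+\alpha+96\max(\frac1{2\alpha},1)$,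 $c=\min\{\frac\gamma{36},\frac B3,\frac17\min(\frac12-\frac{L_U+L_W}{2\alpha},2\sqrt{\frac{L_U+L_W}{2\pi\alpha}})\exp(-\frac18\kappa_0R_1^2)\}$, $\epsilon=3c/B$, $\mathbf C=c+2\epsilon B$, $\phi(s)=\exp(-\frac18(\frac{L_U+L_W}\alpha+\alpha+96\epsilon\max(\frac1{2\alpha},1))s^2)$, $\Phi(s)=\int_0^s\phi$, $g(s)=1-\frac{\mathbf C}4\int_0^s\frac{\Phi(u)}{\phi(u)}du$, $f(s)=\int_0^{\min(s,R_1)}\phi(u)g(u)du$. Finally $\rho((x,v),(\tilde x,\tilde v))=f(r(x,\tilde x,v,\tilde v))\big(1+\epsilon H(x,v)+\epsilon H(\tilde x,\tilde v)\big)$. *)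

From HB Require Import structures.
From mathcomp Require Import all_boot all_order all_algebra.
From mathcomp Require Import all_classical all_reals all_analysis.
Set Implicit Arguments. Unset Strict Implicit. Unset Printing Implicit Defensive.
Import Order.TTheory GRing.Theory Num.Theory.
Import numFieldNormedType.Exports.
Local Open Scope classical_set_scope.
Local Open Scope ring_scope.

Section Defs.
Variables (R : realType) (d : nat).
Notation vec := 'rV[R]_d.

Definition dot (x y : vec) : R := \sum_(i < d) x ord0 i * y ord0 i.
Definition enorm (x : vec) : R := Num.sqrt (dot x x).

Definition int0 (s : R) (f : R -> R) : R :=
  Rintegral (@lebesgue_measure R) `[0, s] f.

Variables (lam A Atil LU LW : R) (U : vec -> R).

Definition gam : R := lam / (2 * (lam + 1)).
Definition Bc : R := 24 * (A + (lam - gam) * Atil + d%:R).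
Definition Hf (x v : vec) : R :=
  24 * U x + (6 * (1 - gam) + lam) * enorm x ^+ 2 + 12 * dot x v
  + 12 * enorm v ^+ 2.
Definition alph : R := LU + lam / 4.
Definition R1 : R :=
  Num.sqrt (24 * ((1 + alph) ^+ 2 + alph ^+ 2)
            / (5 * gam * Num.min 3 (lam / 3)) * Bc).
Definition rr (x x' v v' : vec) : R :=
  alph * enorm (x - x') + enorm (x - x' + (v - v')).
Definition kappa0 : R :=
  (LU + LW) / alph + alph + 96 * Num.max (1 / (2 * alph)) 1.
Definition cc : R :=
  Num.min (gam / 36) (Num.min (Bc / 3)
   (1 / 7 * Num.min (1 / 2 - (LU + LW) / (2 * alph))
                    (2 * Num.sqrt ((LU + LW) / (2 * pi * alph)))
    * expR (- (1 / 8) * kappa0 * R1 ^+ 2))).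
Definition eps : R := 3 * cc / Bc.
Definition Cb : R := cc + 2 * eps * Bc.
Definition phi (s : R) : R :=
  expR (- (1 / 8) * ((LU + LW) / alph + alph
                     + 96 * eps * Num.max (1 / (2 * alph)) 1) * s ^+ 2).
Definition Phi (s : R) : R := int0 s phi.
Definition gg (s : R) : R := 1 - Cb / 4 * int0 s (fun u => Phi u / phi u).
Definition ff (s : R) : R := int0 (Num.min s R1) (fun u => phi u * gg u).
Definition rho (x v x' v' : vec) : R :=
  ff (rr x x' v v') * (1 + eps * Hf x v + eps * Hf x' v').

End Defs.

From HB Require Import structures.
From mathcomp Require Import all_boot all_order all_algebra.
From mathcomp Require Import all_classical all_reals all_analysis.
From mathcomp Require Import ring lra.
Import Order.TTheory GRing.Theory Num.Theory.
Import numFieldNormedType.Exports.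
Set Implicit Arguments. Unset Strict Implicit.
Local Open Scope ring_scope.

(* Write T = |x|^2 + |v|^2 + |x'|^2 + |v'|^2.  Since U >= 0, H(x,v) dominates
   lam/(lam+6) (|x|^2 + |v|^2), so the weight 1 + eps H + eps H' is at least
   1 + eps lam/(lam+6) T.  On [0, R1] the integrand phi g of f stays above
   phi(R1)/2, because the smallness of c forces g >= 1/2; hence
   f(r) >= phi(R1)/2 min(r, R1) and rho >= const * min(r, R1) (1 + T).
   Each left-hand side is O(r) when r <= R1 and O(1 + T) always, hence
   O(min(r, R1) (1 + T)).  For the last bound, T is replaced by
   sqrt H + sqrt H', which dominates |x - x'| in the same way. *)

Section ScalarBounds.
Variable R : realFieldType.

Lemma ler_1Dsqr (t : R) : t <= 1 + t ^+ 2.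
Proof. have := sqr_ge0 (t - 1); rewrite sqrrB1; have := sqr_ge0 t; lra. Qed.

Lemma ler_of_sqr_le (a b c : R) :
  0 <= b -> 0 <= c -> a ^+ 2 <= c * b ^+ 2 -> a <= (1 + c) * b.
Proof.
move=> b0 c0 hab; have [a0|a0] := ltP a 0; first by nra.
rewrite -ler_sqr ?nnegrE //; last by nra.
apply: le_trans hab _; rewrite exprMn ler_wpM2r ?sqr_ge0 //; nra.
Qed.

Lemma quadratic_form_ge (lam p a b : R) : 0 < lam -> 3 + lam <= p ->
  lam / (lam + 6) * (a ^+ 2 + b ^+ 2) <= p * a ^+ 2 + 12 * (a * b) + 12 * b ^+ 2.
Proof.
move=> hlam hp; set c := lam / (lam + 6).
have c1 : c < 1 by rewrite /c ltr_pdivrMr; lra.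
have c0 : 0 < c by rewrite /c divr_gt0 //; lra.
have hc : c * (lam + 6) = lam by rewrite /c divfK //; lra.
set q := p - c.
have q0 : 0 < q by rewrite /q; lra.
have hq : 36 <= q * (12 - c).
  have : 3 + lam - c <= q by rewrite /q; lra.
  nra.
(* completing the square in [a] *)
have key : q * (p * a ^+ 2 + 12 * (a * b) + 12 * b ^+ 2 - c * (a ^+ 2 + b ^+ 2))
           = (q * a + 6 * b) ^+ 2 + (q * (12 - c) - 36) * b ^+ 2.
  by rewrite /q; ring.
suff : 0 <= p * a ^+ 2 + 12 * (a * b) + 12 * b ^+ 2 - c * (a ^+ 2 + b ^+ 2) by lra.
rewrite -(pmulr_rge0 _ q0) key addr_ge0 ?sqr_ge0 // mulr_ge0 ?sqr_ge0 //; lra.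
Qed.

Definition split_const (k a rad c eta : R) := (k + a / rad) / (c * Num.min 1 eta).

Lemma split_const_gt0 (k a rad c eta : R) :
  0 < k -> 0 <= a -> 0 < rad -> 0 < c -> 0 < eta -> 0 < split_const k a rad c eta.
Proof.
move=> k0 a0 rad0 c0 eta0; rewrite /split_const divr_gt0 //.
  by rewrite ltr_wpDr // divr_ge0 // ltW.
by rewrite mulr_gt0 // lt_min ltr01.
Qed.

Lemma le_split_const_mul (Z k a r rad T c eta f Q : R) :
  0 < rad -> 0 <= r -> 0 <= T -> 0 < k -> 0 <= a -> 0 < c -> 0 < eta ->
  c * Num.min r rad <= f -> 1 + eta * T <= Q ->
  (r <= rad -> Z <= k * r) -> Z <= a * (1 + T) ->
  Z <= split_const k a rad c eta * (f * Q).
Proof.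
move=> rad0 r0 T0 /ltW k0 a0 c0 eta0 hf hQ hZr hZT.
set m := Num.min r rad; set M := Num.min 1 eta.
have m0 : 0 <= m by rewrite le_min r0 ltW.
have M0 : 0 < M by rewrite lt_min ltr01.
have hZ : Z <= (k + a / rad) * (m * (1 + T)).
  have arad : 0 <= a / rad by rewrite divr_ge0 // ltW.
  have [rrad|radr] := leP r rad.
    have mr : m = r by rewrite /m (min_idPl rrad).
    apply: le_trans (hZr rrad) _; rewrite mr mulrDl.
    have : k * r <= k * (r * (1 + T)) by apply: ler_wpM2l => //; nra.
    have : 0 <= a / rad * (r * (1 + T)) by rewrite mulr_ge0 // mulr_ge0 //; lra.
    lra.
  have mr : m = rad by rewrite /m (min_idPr (ltW radr)).
  have e : a / rad * (rad * (1 + T)) = a * (1 + T) by rewrite mulrA divfK ?gt_eqF.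
  rewrite mr mulrDl e; have : 0 <= k * (rad * (1 + T)) by rewrite !mulr_ge0 //; lra.
  lra.
have hM : M * (1 + T) <= Q.
  apply: le_trans hQ; rewrite mulrDr mulr1 lerD ?ge_min ?lexx //.
  by rewrite ler_wpM2r // ge_min lexx orbT.
have hcm : c * M * (m * (1 + T)) <= f * Q.
  rewrite mulrACA; apply: ler_pM => //; first by rewrite mulr_ge0 // ltW.
  by rewrite mulr_ge0 // ?ltW //; lra.
apply: le_trans hZ _; rewrite /split_const -/M mulrAC ler_pdivlMr ?mulr_gt0 //.
by rewrite -mulrA ler_wpM2l ?(mulrC _ (c * M)) // addr_ge0 // divr_ge0 // ltW.
Qed.

End ScalarBounds.

Section Int0.
Variable R : realType.
Local Open Scope classical_set_scope.
Local Notation mu := (@lebesgue_measure R).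

(* Unlike [ge0_le_integral], no measurability is needed: the integral of a
   nonnegative function is a supremum over its simple minorants. *)
Lemma ge0_le_integral_nomeas (D : set R) (f g : R -> \bar R) :
  (forall x, D x -> (0 <= f x)%E) -> (forall x, D x -> (f x <= g x)%E) ->
  (\int[mu]_(x in D) f x <= \int[mu]_(x in D) g x)%E.
Proof.
move=> f0 fg.
have g0 x : D x -> (0 <= g x)%E by move=> Dx; exact: le_trans (f0 x Dx) (fg x Dx).
rewrite !ge0_integralE //; apply: le_ereal_sup => _ [h /= hf <-].
exists h => //= x; apply: le_trans (hf x) _.
by rewrite /patch; case: ifP => // /[1!inE] Dx; exact: fg.
Qed.

Lemma int0_0 (f : R -> R) : int0 0 f = 0.
Proof.
rewrite /int0 /Rintegral.
suff -> : (\int[mu]_(x in `[0%R, 0%R]) (f x)%:E = 0)%E by [].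
transitivity (\int[mu]_(x in `[0%R, 0%R]) (cst (f 0)%:E) x)%E.
  apply: eq_integral => x; rewrite inE /= in_itv /= => hx.
  by have -> : x = 0 by apply/eqP; rewrite eq_le andbC.
have mu0 : mu `[0%R, 0%R] = 0%E by rewrite lebesgue_measure_itv /= ltxx.
have mD : measurable (`[0%R, 0%R] : set R) by exact: measurable_itv.
by rewrite integral_cst // [X in (_ * X)%E](_ : _ = 0%E) ?mule0.
Qed.

Lemma int0_bounds (m lo hi : R) (f : R -> R) : 0 <= m -> 0 <= lo ->
  (forall x, 0 <= x <= m -> lo <= f x <= hi) -> lo * m <= int0 m f <= hi * m.
Proof.
move=> m0 lo0 hf; set D := `[0, m].
have Dx x : D x -> lo <= f x <= hi by rewrite /D /= in_itv /=; exact: hf.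
have muD : mu D = m%:E.
  rewrite /D lebesgue_measure_itv /= lte_fin; case: ltrP => [_|hm].
    by rewrite oppr0 adde0.
  by have -> : m = 0 by apply/eqP; rewrite eq_le hm m0.
have mD : measurable D by exact: measurable_itv.
have lo_le : ((lo * m)%:E <= \int[mu]_(x in D) (f x)%:E)%E.
  rewrite EFinM -muD -integral_cst //; apply: ge0_le_integral_nomeas => x.
    by rewrite lee_fin.
  by move/Dx/andP => [h _]; rewrite lee_fin.
have le_hi : (\int[mu]_(x in D) (f x)%:E <= (hi * m)%:E)%E.
  rewrite EFinM -muD -integral_cst //; apply: ge0_le_integral_nomeas => x.
    by move/Dx/andP => [h _]; rewrite lee_fin (le_trans lo0 h).
  by move/Dx/andP => [_ h]; rewrite lee_fin.
rewrite /int0 /Rintegral -/D.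
move: lo_le le_hi; case: (\int[_]_(_ in _) _)%E => [r | | ] //=.
by rewrite !lee_fin => -> ->.
Qed.

End Int0.

Section Euclid.
Variables (R : realType) (d : nat).
Implicit Types x y : 'rV[R]_d.

Lemma dot_ge0 x : 0 <= dot x x.
Proof. by apply: sumr_ge0 => i _; rewrite -expr2 sqr_ge0. Qed.

Lemma enorm_ge0 x : 0 <= enorm x.
Proof. exact: sqrtr_ge0. Qed.

Lemma enorm_sqr x : enorm x ^+ 2 = dot x x.
Proof. by rewrite sqr_sqrtr // dot_ge0. Qed.

Lemma enormN x : enorm (- x) = enorm x.
Proof.
by rewrite /enorm /dot; congr Num.sqrt; apply: eq_bigr => i _; rewrite !mxE mulrNN.
Qed.

Lemma enormD_sqr_le x y : enorm (x + y) ^+ 2 <= 2 * enorm x ^+ 2 + 2 * enorm y ^+ 2.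
Proof.
rewrite !enorm_sqr /dot !mulr_sumr -big_split /=; apply: ler_sum => i _.
by rewrite !mxE; have := sqr_ge0 (x ord0 i - y ord0 i); nra.
Qed.

Lemma enormB_sqr_le x y : enorm (x - y) ^+ 2 <= 2 * enorm x ^+ 2 + 2 * enorm y ^+ 2.
Proof. by rewrite -(enormN y) enormD_sqr_le. Qed.

End Euclid.

Lemma enorm_rV0 (R : realType) (x : 'rV[R]_0) : enorm x = 0.
Proof. by rewrite /enorm /dot big_ord0 sqrtr0. Qed.

Lemma mulr_expRN_le (R : realType) (a y : R) : 0 < a -> 0 <= y ->
  y * expR (- (a * y)) <= a^-1.
Proof.
move=> a0 y0; set z := expR (a * y).
have z0 : 0 < z by exact: expR_gt0.
have hz : a * y <= z by apply: le_trans (expR_ge1Dx _); rewrite lerDr.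
have -> : y * expR (- (a * y)) = a^-1 * (a * y / z) by rewrite expRN mulrA mulKf ?gt_eqF.
apply: ler_piMr; first by rewrite invr_ge0 ltW.
by rewrite ler_pdivrMr // mul1r.
Qed.

Section Constants.
Variables (R : realType) (d : nat) (lam A Atil LU LW : R).
Hypotheses (hlam : 0 < lam) (hA : 0 <= A) (hLU : 0 < LU) (hLW0 : 0 <= LW)
  (hLW : LW < lam / 8) (hAt0 : 0 <= Atil) (hd : (0 < d)%N).

Local Notation al := (alph lam LU).
Local Notation gm := (gam lam).
Local Notation B := (Bc d lam A Atil).
Local Notation rad := (R1 d lam A Atil LU).
Local Notation c := (cc d lam A Atil LU LW).
Local Notation e := (eps d lam A Atil LU LW).
Local Notation kap := (kappa0 lam LU LW).
Local Notation M := (Num.max (1 / (2 * al)) 1).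
Local Notation kphi := ((LU + LW) / al + al + 96 * e * M).
Local Notation ph := (phi d lam A Atil LU LW).
Local Notation Ph := (Phi d lam A Atil LU LW).
Local Notation g := (gg d lam A Atil LU LW).

Lemma alph_gt0 : 0 < al.
Proof. by rewrite /alph addr_gt0 // divr_gt0. Qed.

Lemma gam_gt0 : 0 < gm.
Proof. by rewrite /gam divr_gt0 ?mulr_gt0 ?addr_gt0. Qed.

Lemma gam_lt_half : gm < 1 / 2.
Proof. by have l0 := hlam; rewrite /gam ltr_pdivrMr; lra. Qed.

Lemma Bc_ge24 : 24 <= B.
Proof.
have gm_lam : gm < lam by have l0 := hlam; rewrite /gam ltr_pdivrMr; nra.
have : 1 <= d%:R :> R by rewrite ler1n.
have : 0 <= (lam - gm) * Atil by rewrite mulr_ge0 //; lra.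
have a0 := hA; rewrite /Bc; lra.
Qed.

Lemma cc_gt0 : 0 < c.
Proof.
have al0 := alph_gt0; have B24 := Bc_ge24.
have LUW_lt : LU + LW < al by have := hLW; have := hlam; rewrite /alph; lra.
have LUW0 : 0 < LU + LW by rewrite ltr_wpDr.
have hLUW : 0 < 1 / 2 - (LU + LW) / (2 * al).
  by rewrite subr_gt0 ltr_pdivrMr ?mulr_gt0 //; lra.
have hsqrt : 0 < 2 * Num.sqrt ((LU + LW) / (2 * pi * al)).
  by rewrite mulr_gt0 // sqrtr_gt0 divr_gt0 ?mulr_gt0 ?pi_gt0 //; lra.
rewrite /cc !lt_min divr_gt0 ?gam_gt0 //=; apply/andP; split; first lra.
by rewrite !mulr_gt0 ?expR_gt0 // lt_min hLUW.
Qed.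

Lemma cc_le_gam : c <= gm / 36.
Proof. by rewrite /cc ge_min lexx. Qed.

Lemma Cb_eq : Cb d lam A Atil LU LW = 7 * c.
Proof.
have B24 := Bc_ge24.
by rewrite /Cb /eps -mulrA divfK; [lra | apply/eqP; lra].
Qed.

Lemma Cb_le : Cb d lam A Atil LU LW <= expR (- (1 / 8) * kap * rad ^+ 2) / 2.
Proof.
rewrite Cb_eq; set E := expR _.
have E0 : 0 < E by exact: expR_gt0.
have h_min : Num.min (1 / 2 - (LU + LW) / (2 * al))
    (2 * Num.sqrt ((LU + LW) / (2 * pi * al))) <= 1 / 2.
  have : 0 <= (LU + LW) / (2 * al).
    by have al0 := alph_gt0; have lu := hLU; have lw := hLW0; rewrite divr_ge0; lra.
  by rewrite ge_min; move=> ?; apply/orP; left; lra.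
have : c <= 1 / 7 * Num.min (1 / 2 - (LU + LW) / (2 * al))
    (2 * Num.sqrt ((LU + LW) / (2 * pi * al))) * E.
  by rewrite /cc !ge_min lexx !orbT.
have := ler_wpM2r (ltW E0) h_min; lra.
Qed.

Lemma eps_gt0 : 0 < e.
Proof.
have c0 := cc_gt0; have B24 := Bc_ge24.
by rewrite /eps divr_gt0 //; lra.
Qed.

Lemma eps_le_half : e <= 1 / 2.
Proof.
have B24 := Bc_ge24; have c_le := cc_le_gam; have gm_lt := gam_lt_half.
by rewrite /eps ler_pdivrMr; lra.
Qed.

Lemma kphi_ge0 : 0 <= kphi.
Proof.
have al0 := alph_gt0; have e0 := eps_gt0; have lu := hLU; have lw := hLW0.
have M1 : 1 <= M by rewrite le_max lexx orbT.
have : 0 <= (LU + LW) / al by rewrite divr_ge0; lra.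
have : 0 <= 96 * e * M by apply: mulr_ge0; [apply: mulr_ge0|]; lra.
lra.
Qed.

Lemma kphi_le_kappa0 : kphi + 48 <= kap.
Proof.
have M1 : 1 <= M by rewrite le_max lexx orbT.
have := eps_le_half; rewrite /kappa0; nra.
Qed.

Lemma phiE s : ph s = expR (- (1 / 8) * kphi * s ^+ 2).
Proof. by []. Qed.

Lemma phi_gt0 s : 0 < ph s.
Proof. exact: expR_gt0. Qed.

Lemma phi_le1 s : ph s <= 1.
Proof. by rewrite phiE expR_le1; have := kphi_ge0; have := sqr_ge0 s; nra. Qed.

Lemma phi_nonincreasing s t : 0 <= s <= t -> ph t <= ph s.
Proof.
move=> /andP[s0 st]; rewrite !phiE ler_expR.
have : s ^+ 2 <= t ^+ 2 by rewrite ler_sqr ?nnegrE //; lra.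
have := kphi_ge0; nra.
Qed.

Lemma R1_gt0 : 0 < rad.
Proof.
have al0 := alph_gt0; have g0 := gam_gt0; have B24 := Bc_ge24.
have m0 : 0 < Num.min 3 (lam / 3) by rewrite lt_min; have := hlam; lra.
have B0 : 0 < B by lra.
have al1 : 0 < 1 + al by lra.
have num : 0 < 24 * ((1 + al) ^+ 2 + al ^+ 2).
  by rewrite mulr_gt0 // addr_gt0 // exprn_gt0.
have den : 0 < 5 * gm * Num.min 3 (lam / 3) by rewrite mulr_gt0 // mulr_gt0.
by rewrite sqrtr_gt0 mulr_gt0 // divr_gt0.
Qed.

Lemma Phi_bounds t : 0 <= t -> 0 <= Ph t <= t.
Proof.
move=> t0; have := int0_bounds (f := ph) (hi := 1) t0 (lexx 0).
by rewrite mul0r mul1r; apply=> x _; rewrite ltW ?phi_gt0 ?phi_le1.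
Qed.

Lemma int0_Phi_div_phi_le u : 0 <= u <= rad ->
  0 <= int0 u (fun t => Ph t / ph t) <= rad ^+ 2 * expR (1 / 8 * kphi * rad ^+ 2).
Proof.
move=> /andP[u0 urad]; set E := expR _.
have E0 : 0 < E by exact: expR_gt0.
have /andP[I0 I_le] : 0 * u <= int0 u (fun t => Ph t / ph t) <= rad * E * u.
  apply: int0_bounds => // t /andP[t0 tu]; have /andP[P0 Pt] := Phi_bounds t0.
  rewrite phiE -expRN mulr_ge0 ?expR_ge0 //=; apply: ler_pM => //; first lra.
  rewrite ler_expR; have : t ^+ 2 <= rad ^+ 2 by rewrite ler_sqr ?nnegrE; lra.
  have := kphi_ge0; nra.
rewrite mul0r in I0; rewrite I0 (le_trans I_le) // expr2 mulrAC ler_wpM2r ?(ltW E0) //.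
by rewrite ler_wpM2l // ltW // R1_gt0.
Qed.

Lemma gg_bounds u : 0 <= u <= rad -> 1 / 2 <= g u <= 1.
Proof.
move=> urad; have /andP[I0 I_le] := int0_Phi_div_phi_le urad.
set I := int0 _ _ in I0 I_le *; set y := rad ^+ 2.
have y0 : 0 <= y by exact: sqr_ge0.
have Cb0 : 0 <= Cb d lam A Atil LU LW by rewrite Cb_eq mulr_ge0 // ltW // cc_gt0.
have hexp : expR (- (1 / 8) * kap * y) * expR (1 / 8 * kphi * y) <= expR (- (6 * y)).
  by rewrite -expRD ler_expR; have := kphi_le_kappa0; nra.
have CbI : Cb d lam A Atil LU LW * I <= 1 / 12.
  apply: le_trans (ler_wpM2l Cb0 I_le) _; apply: le_trans (ler_wpM2r _ Cb_le) _.
    by rewrite mulr_ge0 ?expR_ge0.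
  have := mulr_expRN_le (a := 6) (ltr0n _ 6) y0.
  have := ler_wpM2l y0 hexp.
  set E1 := expR (- (1 / 8) * kap * y); set E2 := expR (1 / 8 * kphi * y).
  rewrite -/y; nra.
have : 0 <= Cb d lam A Atil LU LW * I by exact: mulr_ge0.
have -> : g u = 1 - Cb d lam A Atil LU LW / 4 * I by [].
lra.
Qed.

Lemma ff_ge_min s : 0 <= s -> ph rad / 2 * Num.min s rad <= ff d lam A Atil LU LW s.
Proof.
move=> s0; have rad0 := R1_gt0; set m := Num.min s rad.
have m0 : 0 <= m by rewrite le_min s0 ltW.
have /andP[] : ph rad / 2 * m <= int0 m (fun u => ph u * g u) <= 1 * m; last by [].
apply: int0_bounds => //; first by rewrite divr_ge0 // ltW // phi_gt0.
move=> x /andP[x0 xm]; have xrad : 0 <= x <= rad.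
  by rewrite x0 (le_trans xm) // ge_min lexx orbT.
have /andP[g1 g2] := gg_bounds xrad.
have p1 := phi_le1 x; have p0 := phi_gt0 x; have := phi_nonincreasing xrad.
have := phi_gt0 rad; nra.
Qed.

End Constants.

Section Hamiltonian.
Variables (R : realType) (d : nat) (lam : R) (U : 'rV[R]_d -> R).
Hypothesis hlam : 0 < lam.

Lemma Hf_ge x v : 0 <= U x ->
  lam / (lam + 6) * (enorm x ^+ 2 + enorm v ^+ 2) <= Hf lam U x v.
Proof.
move=> Ux0; have l0 := hlam.
have hp : 3 + lam <= 6 * (1 - gam lam) + lam by have := gam_lt_half hlam; lra.
suff : lam / (lam + 6) * (enorm x ^+ 2 + enorm v ^+ 2) <=
    (6 * (1 - gam lam) + lam) * enorm x ^+ 2 + 12 * dot x v + 12 * enorm v ^+ 2.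
  by rewrite /Hf; lra.
rewrite !enorm_sqr /dot mulrDr !mulr_sumr -!big_split /=; apply: ler_sum => i _.
by rewrite -!expr2 -mulrDr quadratic_form_ge.
Qed.

Lemma Hf_ge0 x v : 0 <= U x -> 0 <= Hf lam U x v.
Proof.
move=> Ux0; apply: le_trans _ (Hf_ge v Ux0).
by rewrite mulr_ge0 ?addr_ge0 ?sqr_ge0 // divr_ge0 // ?addr_ge0 // ltW.
Qed.

Lemma Hf_weight_ge (e : R) x v x' v' : 0 <= e -> 0 <= U x -> 0 <= U x' ->
  1 + e * (lam / (lam + 6))
        * (enorm x ^+ 2 + enorm v ^+ 2 + enorm x' ^+ 2 + enorm v' ^+ 2)
    <= 1 + e * Hf lam U x v + e * Hf lam U x' v'.
Proof.
move=> e0 Ux0 Ux'0.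
have := ler_wpM2l e0 (Hf_ge v Ux0); have := ler_wpM2l e0 (Hf_ge v' Ux'0); lra.
Qed.

End Hamiltonian.

Section Increments.
Variables (R : realType) (d : nat) (lam LU : R).
Hypotheses (hlam : 0 < lam) (hLU : 0 < LU).
Variables x x' v v' : 'rV[R]_d.

Local Notation al := (alph lam LU).
Local Notation dx := (enorm (x - x')).
Local Notation dv := (enorm (v - v')).
Local Notation w := (enorm (x - x' + (v - v'))).
Local Notation r := (rr lam LU x x' v v').
Local Notation T := (enorm x ^+ 2 + enorm v ^+ 2 + enorm x' ^+ 2 + enorm v' ^+ 2).

Lemma rr_ge0 : 0 <= r.
Proof. by rewrite addr_ge0 ?enorm_ge0 // mulr_ge0 ?enorm_ge0 // ltW // alph_gt0. Qed.

Lemma enorm_subx_le_rr : dx <= al^-1 * r.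
Proof.
have al0 := alph_gt0 hlam hLU.
rewrite ler_pdivlMl // /rr lerDl; exact: enorm_ge0.
Qed.

Lemma increments_le_rr : dx + dv <= (4 / al + 3) * r.
Proof.
have al0 := alph_gt0 hlam hLU; have dx0 := enorm_ge0 (x - x').
have w0 := enorm_ge0 (x - x' + (v - v')).
have dv_le : dv <= 3 * (w + dx).
  have := enormB_sqr_le (x - x' + (v - v')) (x - x').
  rewrite [_ - (x - x')]addrC addKr => dv_sqr.
  apply: ler_of_sqr_le; [lra | lra | nra].
have w_le : w <= r by rewrite /rr lerDr mulr_ge0 // ltW.
have -> : (4 / al + 3) * r = 4 * (al^-1 * r) + 3 * r by ring.
have := enorm_subx_le_rr; lra.
Qed.

Lemma increments_sqr_le_rr s : r <= s -> dx ^+ 2 + dv ^+ 2 <= (4 / al + 3) ^+ 2 * s * r.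
Proof.
move=> rs; have := increments_le_rr; set k := 4 / al + 3.
have k0 : 0 <= k by rewrite addr_ge0 // divr_ge0 // ltW // alph_gt0.
have dx0 := enorm_ge0 (x - x'); have dv0 := enorm_ge0 (v - v'); have r0 := rr_ge0.
move=> le_kr; have : (dx + dv) ^+ 2 <= (k * r) ^+ 2.
  by rewrite ler_sqr ?nnegrE ?addr_ge0 ?mulr_ge0.
have : k ^+ 2 * r * r <= k ^+ 2 * s * r by rewrite ler_wpM2r // ler_wpM2l // sqr_ge0.
rewrite exprMn; nra.
Qed.

Lemma increments_sqr_le_sqnorms : dx ^+ 2 + dv ^+ 2 <= 2 * T.
Proof. by have := enormB_sqr_le x x'; have := enormB_sqr_le v v'; lra. Qed.

Lemma increments_le_sqnorms : dx + dv <= 2 * (1 + T).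
Proof.
have := ler_1Dsqr dx; have := ler_1Dsqr dv; have := increments_sqr_le_sqnorms.
have := sqr_ge0 dx; have := sqr_ge0 dv; lra.
Qed.

Lemma rr_le_sqnorms : r <= (2 * al + 4) * (1 + T).
Proof.
have al0 := alph_gt0 hlam hLU; have := increments_sqr_le_sqnorms.
have := enormD_sqr_le (x - x') (v - v'); have := sqr_ge0 dv.
have := ler_1Dsqr dx; have := ler_1Dsqr w => ? ? ? ? ?.
have dxT : dx <= 1 + 2 * T by lra.
have : al * dx <= al * (1 + 2 * T) by rewrite ler_wpM2l // ltW.
rewrite /rr; nra.
Qed.

Lemma enorm_subx_le_sqrtHf (U : 'rV[R]_d -> R) : 0 <= U x -> 0 <= U x' ->
  dx <= (1 + 2 / (lam / (lam + 6)))
          * (Num.sqrt (Hf lam U x v) + Num.sqrt (Hf lam U x' v')).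
Proof.
move=> Ux0 Ux'0; set cH := lam / (lam + 6); set h := Num.sqrt _; set h' := Num.sqrt _.
have cH0 : 0 < cH by rewrite divr_gt0 // addr_gt0.
have h0 : 0 <= h := sqrtr_ge0 _; have h'0 : 0 <= h' := sqrtr_ge0 _.
have hx : cH * enorm x ^+ 2 <= h ^+ 2.
  rewrite [h ^+ 2]sqr_sqrtr ?Hf_ge0 //; apply: le_trans _ (Hf_ge hlam v Ux0).
  by apply: ler_wpM2l; [exact: ltW | rewrite lerDl sqr_ge0].
have hx' : cH * enorm x' ^+ 2 <= h' ^+ 2.
  rewrite [h' ^+ 2]sqr_sqrtr ?Hf_ge0 //; apply: le_trans _ (Hf_ge hlam v' Ux'0).
  by apply: ler_wpM2l; [exact: ltW | rewrite lerDl sqr_ge0].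
have ci0 : 0 <= cH^-1 by rewrite invr_ge0 ltW.
have := ler_wpM2l ci0 hx; have := ler_wpM2l ci0 hx'.
rewrite !mulKf ?lt0r_neq0 // => le_x' le_x.
have le_sum : cH^-1 * (h ^+ 2 + h' ^+ 2) <= cH^-1 * (h + h') ^+ 2.
  by rewrite ler_wpM2l // sqrrD; nra.
apply: ler_of_sqr_le; [exact: addr_ge0 | by rewrite divr_ge0 // ltW |].
have := enormB_sqr_le x x'; lra.
Qed.

End Increments.

Unset Implicit Arguments. Set Strict Implicit.

Theorem lemma2p6 (R : realType) (d : nat)
  (U W : 'rV[R]_d -> R) (gradU gradW : 'rV[R]_d -> 'rV[R]_d)
  (lam A Atil LU LW : R)
  (* U, W are C^1 with gradients gradU, gradW (continuity follows from (A2),(A3)) *)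
  (hU : forall x, differentiable U x /\ forall h, 'd U x h = dot (gradU x) h)
  (hW : forall x, differentiable W x /\ forall h, 'd W x h = dot (gradW x) h)
  (* (A1) *)
  (hU0 : forall x, 0 <= U x) (hlam : 0 < lam) (hA : 0 <= A)
  (hA1 : forall x, dot (gradU x) x / 2
                   >= lam * (U x + enorm x ^+ 2 / 4) - A)
  (* (A2) *)
  (hLU : 0 < LU)
  (hA2 : forall x y, enorm (gradU x - gradU y) <= LU * enorm (x - y))
  (* (A3) *)
  (hWeven : forall x, W (- x) = W x)
  (hLW0 : 0 <= LW) (hLW : LW < lam / 8)
  (hA3 : forall x y, enorm (gradW x - gradW y) <= LW * enorm (x - y))
  (* choice of Atil *)
  (hAt0 : 0 <= Atil)
  (hAt : forall x, U x >= lam / 6 * enorm x ^+ 2 - Atil) :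
  exists C1 C2 Cr Cz : R, [/\ 0 < C1, 0 < C2, 0 < Cr, 0 < Cz &
    forall x x' v v' : 'rV[R]_d,
      let rh := rho lam A Atil LU LW U x v x' v' in
      [/\ enorm (x - x') + enorm (v - v') <= C1 * rh,
          enorm (x - x') ^+ 2 + enorm (v - v') ^+ 2 <= C2 * rh,
          rr lam LU (x) x' v v' <= Cr * rh &
          enorm (x - x') <= Cz * ff d lam A Atil LU LW (rr lam LU x x' v v')
             * (1 + eps d lam A Atil LU LW * Num.sqrt (Hf lam U x v)
                  + eps d lam A Atil LU LW * Num.sqrt (Hf lam U x' v'))]].
Proof.
(* For d = 0, Bc and hence eps may vanish, but then both sides are 0. *)
have [d0|d_gt0] := posnP d.
  subst d; exists 1, 1, 1, 1; split=> // x x' v v' /=.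
  have ff0 : ff 0 lam A Atil LU LW (rr lam LU x x' v v') = 0.
    by rewrite /rr !enorm_rV0 mulr0 addr0 /ff (min_idPl (sqrtr_ge0 _)) int0_0.
  by rewrite /rho ff0 /rr !enorm_rV0 !(mul0r, mulr0, addr0, expr0n).
set al := alph lam LU; set e := eps d lam A Atil LU LW; set rad := R1 d lam A Atil LU.
set cH := lam / (lam + 6); set cf := phi d lam A Atil LU LW rad / 2.
have al0 : 0 < al := alph_gt0 hlam hLU.
have e0 : 0 < e := eps_gt0 hlam hA hLU hLW0 hLW hAt0 d_gt0.
have rad0 : 0 < rad := R1_gt0 hlam hA hLU hAt0 d_gt0.
have cf0 : 0 < cf by rewrite divr_gt0 // phi_gt0.
have cH0 : 0 < cH by rewrite divr_gt0 // addr_gt0.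
have ecH0 : 0 < e * cH by exact: mulr_gt0.
have k1 : 0 < 4 / al + 3 by rewrite addr_gt0 // divr_gt0.
have k2 : 0 < (4 / al + 3) ^+ 2 * rad by rewrite mulr_gt0 // exprn_gt0.
have ali : 0 < al^-1 by rewrite invr_gt0.
have ar : 0 <= 2 * al + 4 by rewrite addr_ge0 // mulr_ge0 // ltW.
have az : 0 <= 1 + 2 / cH by rewrite addr_ge0 // divr_ge0 // ltW.
exists (split_const (4 / al + 3) 2 rad cf (e * cH)),
  (split_const ((4 / al + 3) ^+ 2 * rad) 2 rad cf (e * cH)),
  (split_const 1 (2 * al + 4) rad cf (e * cH)), (split_const al^-1 (1 + 2 / cH) rad cf e).
split; last move=> x x' v v' /=; try exact: split_const_gt0.
pose T := enorm x ^+ 2 + enorm v ^+ 2 + enorm x' ^+ 2 + enorm v' ^+ 2.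
have T0 : 0 <= T by rewrite !addr_ge0 ?sqr_ge0.
rewrite /rho; set r := rr lam LU x x' v v'.
have r0 : 0 <= r := rr_ge0 hlam hLU x x' v v'.
have ff_ge := ff_ge_min hlam hA hLU hLW0 hLW hAt0 d_gt0 r0; rewrite -/rad -/cf in ff_ge.
have Q_ge := Hf_weight_ge hlam v v' (ltW e0) (hU0 x) (hU0 x').
split.
- apply: (le_split_const_mul (r := r) (T := T)) => //; last exact: increments_le_sqnorms.
  by move=> _; exact: increments_le_rr.
- apply: (le_split_const_mul (r := r) (T := T)) => //; first exact: increments_sqr_le_rr.
  by apply: le_trans (increments_sqr_le_sqnorms x x' v v') _; rewrite ler_wpM2l // lerDr.
- apply: (le_split_const_mul (r := r) (T := T)) => //; last exact: rr_le_sqnorms.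
  by move=> _; rewrite mul1r.
- rewrite -mulrA.
  apply: (le_split_const_mul (r := r)
    (T := Num.sqrt (Hf lam U x v) + Num.sqrt (Hf lam U x' v'))) => //.
  + by rewrite mulrDr addrA.
  + by move=> _; exact: enorm_subx_le_rr.
  + apply: le_trans (enorm_subx_le_sqrtHf hlam v v' (hU0 x) (hU0 x')) _.
    by rewrite ler_wpM2l ?lerDr.
Qed.
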